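(* Let $k,t \geq 2$ be integers and $1 \leq r \leq t$. If $z = \eta + iy$ with $\eta > 0$ and $q=e^{-z}$, then \[ |L_k^\times(r,t;q)| \leq \frac{e^{\eta}}{\eta^2}. \]
   Context: $L_k^\times(r,t;q) \coloneqq \sum_{m\ge1,\ k\nmid m,\ m\equiv r \pmod t} \frac{q^m}{1-q^m}$. *)

From Stdlib Require Import Reals Arith Bool.
From Coquelicot Require Import Coquelicot.
Open Scope R_scope.

Definition Cexp (z : C) : C :=
  (exp (Re z) * cos (Im z), exp (Re z) * sin (Im z)).

Fixpoint Cpow (x : C) (n : nat) : C :=
  match n with O => 1%C | S n' => Cmult x (Cpow x n') end.

Definition Lterm (k r t : nat) (q : C) (m : nat) : C :=
  if andb (andb (1 <=? m)%nat (negb (m mod k =? 0)%nat)) (m mod t =? r mod t)%nat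
  then Cdiv (Cpow q m) (Cminus 1%C (Cpow q m))
  else 0%C.

Definition is_Lkx (k r t : nat) (q : C) (l : C) : Prop :=
  is_series (Lterm k r t q) l.

From Stdlib Require Import Reals Lra.
From Coquelicot Require Import Coquelicot.
Open Scope R_scope.

(* With a = |q| = e^(-eta) < 1, every term satisfies |q^m / (1 - q^m)| <= a^m / (1 - a),
   so the series converges absolutely and its sum is at most
   sum_(m >= 1) a^m / (1 - a) = a / (1 - a)^2 = e^eta / (e^eta - 1)^2 <= e^eta / eta^2,
   the last step by e^eta - 1 >= eta.  The congruence and divisibility conditions
   on m only discard terms. *)

Lemma Cmod_Cpow (q : C) (m : nat) : Cmod (Cpow q m) = Cmod q ^ m.
Proof.
  induction m as [|m IHm]; simpl.
  - apply Cmod_1.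
  - now rewrite Cmod_mult, IHm.
Qed.

Lemma Cmod_Cexp (z : C) : Cmod (Cexp z) = exp (Re z).
Proof.
  unfold Cexp, Cmod; simpl.
  match goal with
  | |- sqrt ?x = _ =>
      replace x with (exp (Re z) ^ 2 * (Rsqr (sin (Im z)) + Rsqr (cos (Im z))))
        by (unfold Rsqr; ring)
  end.
  rewrite sin2_cos2, Rmult_1_r.
  apply sqrt_pow2, Rlt_le, exp_pos.
Qed.

Lemma Cmod_div_1_minus_le (p : C) :
  Cmod p < 1 -> Cmod (p / (1 - p)) <= Cmod p / (1 - Cmod p).
Proof.
  intros Hp.
  assert (Hden : 1 - Cmod p <= Cmod (1 - p)).
  { assert (H : Cmod (1 - p + p)%C <= Cmod (1 - p)%C + Cmod p) by apply Cmod_triangle.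
    replace (1 - p + p)%C with (RtoC 1) in H by ring.
    rewrite Cmod_1 in H; lra. }
  assert (Hnz : (1 - p)%C <> 0%C).
  { intros E; rewrite E, Cmod_0 in Hden; lra. }
  rewrite Cmod_div by exact Hnz.
  apply Rmult_le_compat_l; [apply Cmod_ge_0|].
  apply Rinv_le_contravar; lra.
Qed.

Lemma Cmod_Lterm_S_le (k r t : nat) (q : C) (m : nat) :
  Cmod q < 1 ->
  Cmod (Lterm k r t q (S m)) <= Cmod q / (1 - Cmod q) * Cmod q ^ m.
Proof.
  intros Hq.
  set (a := Cmod q) in *.
  assert (Ha0 : 0 <= a) by apply Cmod_ge_0.
  assert (Ham : 0 <= a ^ m <= 1)
    by (split; [apply pow_le | rewrite <- (pow1 m); apply pow_incr]; lra).
  replace (a / (1 - a) * a ^ m) with (a ^ S m / (1 - a)) by (simpl; field; lra).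
  unfold Lterm; destruct (andb _ _).
  2: { rewrite Cmod_0; apply Rdiv_le_0_compat; [apply pow_le |]; lra. }
  assert (Hpow : a ^ S m <= a) by (simpl; nra).
  eapply Rle_trans; [apply Cmod_div_1_minus_le; rewrite Cmod_Cpow; fold a; lra|].
  rewrite Cmod_Cpow; fold a.
  apply Rmult_le_compat_l; [apply pow_le | apply Rinv_le_contravar]; lra.
Qed.

Lemma is_series_norm_le {K : AbsRing} {V : CompleteNormedModule K}
    (a : nat -> V) (b : nat -> R) (s : R) :
  (forall n, norm (a n) <= b n) -> is_series b s ->
  exists l, is_series a l /\ norm l <= s.
Proof.
  intros Hab Hb.
  destruct (ex_series_le a b Hab (ex_intro _ s Hb)) as [l Hl].
  exists l; split; [exact Hl|].
  change (Rbar_le (norm l) s).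
  apply (is_lim_seq_le (fun n => norm (sum_n a n)) (sum_n b)).
  - intros n; unfold sum_n.
    eapply Rle_trans; [exact (norm_sum_n_m a 0 n) | exact (sum_n_m_le _ _ 0 n Hab)].
  - eapply filterlim_comp; [exact Hl | apply filterlim_norm].
  - exact Hb.
Qed.

Lemma is_series_decr_1_zero {K : AbsRing} {V : NormedModule K} (a : nat -> V) (l : V) :
  a 0%nat = zero -> is_series (fun n => a (S n)) l -> is_series a l.
Proof.
  intros Ha0 Hl; apply is_series_decr_1.
  assert (E : plus l (opp (a 0%nat)) = l) by (rewrite Ha0; exact (minus_zero_r l)).
  now rewrite E.
Qed.

Lemma is_Lkx_Cmod_le (k r t : nat) (q : C) :
  Cmod q < 1 ->
  exists l, is_Lkx k r t q l /\ Cmod l <= Cmod q / (1 - Cmod q) ^ 2.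
Proof.
  intros Hq.
  set (a := Cmod q) in *.
  assert (Ha0 : 0 <= a) by apply Cmod_ge_0.
  assert (Hgeom : is_series (fun m => a / (1 - a) * a ^ m) (a / (1 - a) ^ 2)).
  { replace (a / (1 - a) ^ 2) with (a / (1 - a) * / (1 - a)) by (field; lra).
    assert (Hg : is_series (fun m => a ^ m) (/ (1 - a)))
      by (apply is_series_geom; rewrite Rabs_pos_eq; lra).
    exact (@is_series_scal R_AbsRing R_NormedModule (a / (1 - a)) _ _ Hg). }
  destruct (is_series_norm_le (fun m => Lterm k r t q (S m)) _ _
              (fun m => Cmod_Lterm_S_le k r t q m Hq) Hgeom) as [l [Hl Hlb]].
  exists l; split; [|exact Hlb].
  apply is_series_decr_1_zero; [reflexivity | exact Hl].
Qed.

Lemma exp_opp_div_sqr_le (eta : R) :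
  0 < eta -> exp (- eta) / (1 - exp (- eta)) ^ 2 <= exp eta / eta ^ 2.
Proof.
  intros Heta.
  assert (Hlin : 1 + eta < exp eta) by (apply exp_ineq1; lra).
  assert (Hpos : 0 < exp eta) by apply exp_pos.
  rewrite exp_Ropp.
  replace (/ exp eta / (1 - / exp eta) ^ 2) with (exp eta / (exp eta - 1) ^ 2)
    by (field; lra).
  apply Rmult_le_compat_l; [lra|].
  apply Rinv_le_contravar; [apply pow_lt; lra | simpl; nra].
Qed.

Theorem lemma3p9 (k t r : nat) (eta y : R) :
  (2 <= k)%nat -> (2 <= t)%nat -> (1 <= r <= t)%nat -> 0 < eta ->
  let q := Cexp (Copp (eta, y)) in
  exists l : C, is_Lkx k r t q l /\ Cmod l <= exp eta / eta ^ 2.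
Proof.
  intros _ _ _ Heta q.
  assert (Hq : Cmod q = exp (- eta)) by apply Cmod_Cexp.
  assert (Hq1 : Cmod q < 1).
  { rewrite Hq, <- exp_0; apply exp_increasing; lra. }
  destruct (is_Lkx_Cmod_le k r t q Hq1) as [l [Hl Hlb]].
  exists l; split; [exact Hl|].
  rewrite Hq in Hlb.
  eapply Rle_trans; [exact Hlb | now apply exp_opp_div_sqr_le].
Qed.
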